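(* Let $\mathrm{Fg}(K)$ be a function graph group with shifting action $\circ$ on $A\times B$, and let $Q\in K$. Then the standard complement $A_Q$ is a closed subgroup of $\mathrm{Fg}(K)$, and the orbits of $A_Q$ on $A\times B$ are exactly the level sets of the function $(x,y)\mapsto y-Q(x)$.
   Context: Let $A,B$ be finite abelian groups. The functions $A\to B$ form an abelian group under pointwise addition; for $t\in A$ the shift $a_t$ is $(a_tQ)(x)=Q(x-t)$. A function group is a subgroup $K$ of this group closed under all shifts. The function graph group $\mathrm{Fg}(K)=K\rtimes A$ has multiplication $(Q_1,t_1)(Q_2,t_2)=(Q_1+a_{t_1}Q_2,t_1+t_2)$ and acts on $A\times B$ by the shifting action $(Q,t)\circ(x,y)=(x+t,\,y+Q(x+t))$. For $Q\in K,t\in A$ put $a_{Q,t}=(Q-a_tQ,t)$ and $A_Q=\{a_{Q,t}:t\in A\}$ (a standard complement); $\mathcal{SC}=\{A_Q:Q\in K\}$. A subgroup $H$ is closed if every group element that maps each $H$-orbit onto itself lies in $H$. *)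

From HB Require Import structures.
From mathcomp Require Import all_boot all_order all_algebra all_fingroup.
Set Implicit Arguments. Unset Strict Implicit. Unset Printing Implicit Defensive.
Import GRing.Theory.
Local Open Scope ring_scope.

Section FunctionGraphGroup.
Variables (A B : finZmodType).

Definition shift (t : A) (Q : {ffun A -> B}) : {ffun A -> B} :=
  [ffun x => Q (x - t)].

Definition function_group (K : {set {ffun A -> B}}) : Prop :=
  [/\ 0 \in K, {in K &, forall P Q, P - Q \in K}
    & forall t, {in K, forall Q, shift t Q \in K}].

(* carrier of the semidirect product (all functions) x| A *)
Definition fgT := ({ffun A -> B} * A)%type.
HB.instance Definition _ := Finite.on fgT.

Definition fg_mul (g h : fgT) : fgT := (g.1 + shift g.2 h.1, g.2 + h.2).
Definition fg_one : fgT := (0, 0).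
Definition fg_inv (g : fgT) : fgT := (- shift (- g.2) g.1, - g.2).

Lemma shift0 Q : shift 0 Q = Q.
Proof. by apply/ffunP=> x; rewrite ffunE subr0. Qed.
Lemma shiftD t Q R : shift t (Q + R) = shift t Q + shift t R.
Proof. by apply/ffunP=> x; rewrite !ffunE. Qed.
Lemma shiftN t Q : shift t (- Q) = - shift t Q.
Proof. by apply/ffunP=> x; rewrite !ffunE. Qed.
Lemma shiftM s t Q : shift s (shift t Q) = shift (s + t) Q.
Proof. by apply/ffunP=> x; rewrite !ffunE opprD addrA. Qed.

Lemma fg_mulA : associative fg_mul.
Proof.
move=> [Q1 t1] [Q2 t2] [Q3 t3]; rewrite /fg_mul /=.
by rewrite shiftD shiftM !addrA.
Qed.
Lemma fg_mul1 : left_id fg_one fg_mul.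
Proof. by move=> [Q t]; rewrite /fg_mul /= shift0 !add0r. Qed.
Lemma fg_mulV : left_inverse fg_one fg_inv fg_mul.
Proof.
by move=> [Q t]; rewrite /fg_mul /fg_inv /= !addNr.
Qed.

HB.instance Definition _ := Finite_isGroup.Build fgT fg_mulA fg_mul1 fg_mulV.

Definition Fg (K : {set {ffun A -> B}}) : {set fgT} := [set g | g.1 \in K].

Definition shact (g : fgT) (p : A * B) : A * B :=
  (p.1 + g.2, p.2 + g.1 (p.1 + g.2)).

Definition horbit (H : {set fgT}) (p : A * B) : {set A * B} :=
  [set shact h p | h in H].

Definition closed_in (K : {set {ffun A -> B}}) (H : {set fgT}) : Prop :=
  forall g, g \in Fg K ->
    (forall p, [set shact g q | q in horbit H p] = horbit H p) -> g \in H.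

Definition aQt (Q : {ffun A -> B}) (t : A) : fgT := (Q - shift t Q, t).
Definition AQ (Q : {ffun A -> B}) : {set fgT} := [set aQt Q t | t : A].

End FunctionGraphGroup.

From HB Require Import structures.
From mathcomp Require Import all_boot all_order all_algebra all_fingroup.
Import GRing.Theory.
Local Open Scope ring_scope.

(* Write [level Q c] for the level set {(x,y) | y - Q x = c}.
   - t |-> a_{Q,t} is a homomorphism A -> Fg (a_{Q,s} a_{Q,t} = a_{Q,s+t}),
     so its image A_Q is a group; it lies in Fg(K) because K is closed
     under shifts and differences.
   - The element a_{Q,t} acts by (x,y) |-> (x+t, y + Q(x+t) - Q x), i.e. it
     moves along the level set of (x,y), and every point of that level set
     is reached by a suitable t: the A_Q-orbits are exactly the level sets.
   - Closedness: if g = (P,s) maps every A_Q-orbit (level set) into itself,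
     evaluating at the points (z - s, 0) forces P = Q - a_s Q, i.e.
     g = a_{Q,s} \in A_Q. *)

Section StandardComplement.
Variables (A B : finZmodType) (Q : {ffun A -> B}).

Definition level (c : B) : {set A * B} := [set q | q.2 - Q q.1 == c].

Lemma aQtD (s t : A) : (aQt Q s * aQt Q t)%g = aQt Q (s + t).
Proof.
rewrite /aQt; congr (_, _) => /=.
by rewrite shiftD shiftN shiftM addrA subrK.
Qed.

Lemma aQt0 : aQt Q 0 = 1%g.
Proof. by rewrite /aQt shift0 subrr. Qed.

Lemma group_set_AQ : group_set (AQ Q).
Proof.
apply/group_setP; split; first by apply/imsetP; exists 0; rewrite ?aQt0.
move=> _ _ /imsetP [s _ ->] /imsetP [t _ ->].
by apply/imsetP; exists (s + t); rewrite ?aQtD.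
Qed.

Lemma AQ_sub_Fg (K : {set {ffun A -> B}}) :
  function_group K -> Q \in K -> AQ Q \subset Fg K.
Proof.
case=> _ subK shK QK; apply/subsetP=> _ /imsetP [t _ ->].
by rewrite inE /= subK ?shK.
Qed.

Lemma shact_aQt (t : A) (p : A * B) :
  shact (aQt Q t) p = (p.1 + t, p.2 + (Q (p.1 + t) - Q p.1)).
Proof. by rewrite /shact /aQt /= !ffunE addrK. Qed.

Lemma horbit_AQ (p : A * B) : horbit (AQ Q) p = level (p.2 - Q p.1).
Proof.
apply/setP=> q; rewrite inE; apply/imsetP/eqP.
- move=> [_ /imsetP [t _ ->] ->]; rewrite shact_aQt /=.
  by rewrite (addrC (Q _)) addrA addrK.
- case: q => a b /= level_ab; exists (aQt Q (a - p.1)); first exact: imset_f.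
  rewrite shact_aQt /= [p.1 + _]addrC subrK; congr (_, _).
  by rewrite (addrC (Q a)) addrA -level_ab subrK.
Qed.

Lemma level_preserving_aQt (g : fgT A B) :
  (forall p, shact g p \in level (p.2 - Q p.1)) -> g = aQt Q g.2.
Proof.
case: g => P s /= Hg; rewrite /aQt; congr (_, _); apply/ffunP=> z.
have := Hg (z - s, 0); rewrite inE /shact /= subrK add0r sub0r !ffunE.
by move=> /eqP <-; rewrite addrC subrK.
Qed.

Lemma closed_AQ (K : {set {ffun A -> B}}) : closed_in K (AQ Q).
Proof.
move=> g _ stab; suff -> : g = aQt Q g.2 by exact: imset_f.
apply: level_preserving_aQt => p.
by rewrite -horbit_AQ -stab imset_f // horbit_AQ inE.
Qed.

Lemma orbits_AQ :
  [set horbit (AQ Q) p | p : A * B] = [set level c | c : B].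
Proof.
apply/setP=> S; apply/imsetP/imsetP.
- by move=> [p _ ->]; exists (p.2 - Q p.1); rewrite ?horbit_AQ.
- by move=> [c _ ->]; exists (0, c + Q 0); rewrite ?horbit_AQ //= addrK.
Qed.

End StandardComplement.

Theorem proposition6 (A B : finZmodType) (K : {set {ffun A -> B}})
    (hK : function_group K) (Q : {ffun A -> B}) (hQ : Q \in K) :
  [/\ group_set (AQ Q), AQ Q \subset Fg K, closed_in K (AQ Q)
    & [set horbit (AQ Q) p | p : A * B] =
      [set [set q : A * B | q.2 - Q q.1 == c] | c : B]].
Proof.
split; [exact: group_set_AQ | exact: AQ_sub_Fg | exact: closed_AQ
       | exact: orbits_AQ].
Qed.
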